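(* Let $(A,+,\circ)$ be a skew brace. Then $\zeta(A)$ is a central ideal of $A$, i.e. $\llbracket A,\zeta(A)\rrbracket=0$, and it contains every central ideal of $A$; thus $\zeta(A)$ is the largest central ideal of $A$.
   Context: A skew brace is a triple $(A,+,\circ)$ where $(A,+)$ and $(A,\circ)$ are groups (not necessarily abelian; $+$ is written additively) such that $x\circ(y+z)=(x\circ y)-x+(x\circ z)$ for all $x,y,z\in A$; the common neutral element is $0$, $-x$ is the $+$-inverse and $\bar x$ the $\circ$-inverse. Let $\lambda_x(y)=-x+(x\circ y)$, $x*y=-x+(x\circ y)-y$, $[x,y]_+=x+y-x-y$. An ideal is a subgroup $I$ of $(A,+)$ with $\lambda_a(I)\subseteq I$ for all $a\in A$ that is normal in both $(A,+)$ and $(A,\circ)$. A binary polynomial of $A$ is a map $A^2\to A$ of the form $(x,y)\mapsto t(c_1,\dots,c_k,x,y)$ with $t$ a term in $+,-,\circ,\bar{\ },0$ and constants $c_i\in A$; it is absorbing if $f(a,0)=f(0,a)=0$ for all $a$. For ideals $I,J$, $\llbracket I,J\rrbracket$ is the ideal generated by $\{f(i,j): i\in I,j\in J, f\text{ absorbing binary polynomial}\}$; an ideal $I$ is central if $\llbracket A,I\rrbracket=0$. The center is $\zeta(A)=\{x\in A: x*y=y*x=[x,y]_+=0\ \forall y\in A\}$. *)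

Record skew_brace := SkewBrace {
  carrier :> Type;
  sb_add  : carrier -> carrier -> carrier;
  sb_opp  : carrier -> carrier;
  sb_zero : carrier;
  sb_circ : carrier -> carrier -> carrier;
  sb_inv  : carrier -> carrier;
  sb_addA : forall x y z, sb_add x (sb_add y z) = sb_add (sb_add x y) z;
  sb_add0l : forall x, sb_add sb_zero x = x;
  sb_add0r : forall x, sb_add x sb_zero = x;
  sb_addNl : forall x, sb_add (sb_opp x) x = sb_zero;
  sb_addNr : forall x, sb_add x (sb_opp x) = sb_zero;
  sb_circA : forall x y z, sb_circ x (sb_circ y z) = sb_circ (sb_circ x y) z;
  sb_circ0l : forall x, sb_circ sb_zero x = x;
  sb_circ0r : forall x, sb_circ x sb_zero = x;
  sb_circVl : forall x, sb_circ (sb_inv x) x = sb_zero;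
  sb_circVr : forall x, sb_circ x (sb_inv x) = sb_zero;
  sb_compat : forall x y z,
    sb_circ x (sb_add y z) = sb_add (sb_add (sb_circ x y) (sb_opp x)) (sb_circ x z)
}.

Arguments sb_add {s} _ _.
Arguments sb_opp {s} _.
Arguments sb_zero {s}.
Arguments sb_circ {s} _ _.
Arguments sb_inv {s} _.

Section SkewBraceDefs.
Variable A : skew_brace.

Definition lam (x y : A) : A := sb_add (sb_opp x) (sb_circ x y).

Definition sb_star (x y : A) : A :=
  sb_add (sb_add (sb_opp x) (sb_circ x y)) (sb_opp y).

Definition add_comm (x y : A) : A :=
  sb_add (sb_add (sb_add x y) (sb_opp x)) (sb_opp y).

Definition is_ideal (I : A -> Prop) : Prop :=
  I sb_zero /\
  (forall x y, I x -> I y -> I (sb_add x y)) /\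
  (forall x, I x -> I (sb_opp x)) /\
  (forall a x, I x -> I (lam a x)) /\
  (forall a x, I x -> I (sb_add (sb_add a x) (sb_opp a))) /\
  (forall x y, I x -> I y -> I (sb_circ x y)) /\
  (forall x, I x -> I (sb_inv x)) /\
  (forall a x, I x -> I (sb_circ (sb_circ a x) (sb_inv a))).

Inductive bterm : Type :=
  | TVarX : bterm
  | TVarY : bterm
  | TCst : A -> bterm
  | TZero : bterm
  | TAdd : bterm -> bterm -> bterm
  | TOpp : bterm -> bterm
  | TCirc : bterm -> bterm -> bterm
  | TInv : bterm -> bterm.

Fixpoint beval (t : bterm) (x y : A) : A :=
  match t with
  | TVarX => x
  | TVarY => y
  | TCst c => c
  | TZero => sb_zero
  | TAdd t1 t2 => sb_add (beval t1 x y) (beval t2 x y)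
  | TOpp t1 => sb_opp (beval t1 x y)
  | TCirc t1 t2 => sb_circ (beval t1 x y) (beval t2 x y)
  | TInv t1 => sb_inv (beval t1 x y)
  end.

(* binary polynomial (x,y) |-> beval t x y is absorbing *)
Definition absorbing (t : bterm) : Prop :=
  forall a, beval t a sb_zero = sb_zero /\ beval t sb_zero a = sb_zero.

Definition ideal_gen (S : A -> Prop) : A -> Prop :=
  fun z => forall J, is_ideal J -> (forall s, S s -> J s) -> J z.

Definition bcomm (I J : A -> Prop) : A -> Prop :=
  ideal_gen (fun z => exists t i j, absorbing t /\ I i /\ J j /\ z = beval t i j).

Definition fullset : A -> Prop := fun _ => True.

Definition central (I : A -> Prop) : Prop :=
  forall z, bcomm fullset I z <-> z = sb_zero.

Definition zeta : A -> Prop :=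
  fun x => forall y, sb_star x y = sb_zero /\ sb_star y x = sb_zero /\ add_comm x y = sb_zero.

End SkewBraceDefs.

Arguments lam {A}. Arguments sb_star {A}. Arguments add_comm {A}.
Arguments is_ideal {A}. Arguments absorbing {A}. Arguments ideal_gen {A}.
Arguments bcomm {A}. Arguments fullset {A}. Arguments central {A}. Arguments zeta {A}.

(* Call x "trivially acting" if x o y = x + y, y o x = y + x and x + y = y + x
   for every y; by unfolding the definitions, zeta(A) is exactly the set of
   such elements.  These elements form a subgroup of both (A,+) and (A,o) on
   which the two operations agree, and they are fixed by lambda and by both
   conjugations, so zeta(A) is an ideal.

   For centrality we show that every term t(a, z) with z in zeta(A) can be
   written as t(a, 0) + c with c in zeta(A) independent of a (the two group
   operations and inverses commute with adding a trivially acting element).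
   For an absorbing t this gives t(a, z) = t(a, 0) + t(0, z) = 0, so all the
   generators of [[A, zeta(A)]] vanish and [[A, zeta(A)]] = 0.

   Conversely, if I is a central ideal and x is in I, then x * y, y * x and
   [x, y]_+ are values of absorbing binary polynomials at (y, x), hence lie
   in [[A, I]] = 0, so x is in zeta(A). *)

From Stdlib Require Import Setoid.

Section SkewBraceCentre.
Variable A : skew_brace.

Local Infix "⊕" := (@sb_add A) (at level 50, left associativity).
Local Notation "⊖ x" := (@sb_opp A x) (at level 35, right associativity).
Local Infix "⊙" := (@sb_circ A) (at level 40, left associativity).
Local Notation O := (@sb_zero A).
Local Notation inv := (@sb_inv A).

Lemma addKl (x y : A) : ⊖ x ⊕ (x ⊕ y) = y.
Proof. rewrite sb_addA, sb_addNl, sb_add0l; reflexivity. Qed.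

Lemma addNKl (x y : A) : x ⊕ (⊖ x ⊕ y) = y.
Proof. rewrite sb_addA, sb_addNr, sb_add0l; reflexivity. Qed.

Lemma addKr (x y : A) : y ⊕ x ⊕ ⊖ x = y.
Proof. rewrite <- sb_addA, sb_addNr, sb_add0r; reflexivity. Qed.

Lemma addNKr (x y : A) : y ⊕ ⊖ x ⊕ x = y.
Proof. rewrite <- sb_addA, sb_addNl, sb_add0r; reflexivity. Qed.

Lemma opp0 : ⊖ O = O.
Proof. rewrite <- (sb_add0l A (⊖ O)) at 1. apply sb_addNr. Qed.

Lemma opp_uniq (x w : A) : x ⊕ w = O -> ⊖ x = w.
Proof. intro H. rewrite <- (addKl x w), H, sb_add0r. reflexivity. Qed.

Lemma oppD (x y : A) : ⊖ (x ⊕ y) = ⊖ y ⊕ ⊖ x.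
Proof.
  apply opp_uniq.
  rewrite <- sb_addA, (sb_addA A y), sb_addNr, sb_add0l, sb_addNr. reflexivity.
Qed.

Lemma inv_uniq (x w : A) : x ⊙ w = O -> inv x = w.
Proof.
  intro H. rewrite <- (sb_circ0r A (inv x)), <- H, sb_circA, sb_circVl, sb_circ0l.
  reflexivity.
Qed.

Lemma invM (x y : A) : inv (x ⊙ y) = inv y ⊙ inv x.
Proof.
  apply inv_uniq.
  rewrite <- sb_circA, (sb_circA A y), sb_circVr, sb_circ0l, sb_circVr. reflexivity.
Qed.

Lemma sub_eq0 (u v : A) : u ⊕ ⊖ v = O <-> u = v.
Proof.
  split; intro H.
  - rewrite <- (addNKr v u), H, sb_add0l. reflexivity.
  - rewrite H. apply sb_addNr.
Qed.

Lemma star_eq0 (x y : A) : sb_star x y = O <-> x ⊙ y = x ⊕ y.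
Proof.
  unfold sb_star. rewrite sub_eq0. split; intro H.
  - rewrite <- (addNKl x (x ⊙ y)), H. reflexivity.
  - rewrite H. apply addKl.
Qed.

Lemma add_comm_eq0 (x y : A) : add_comm x y = O <-> x ⊕ y = y ⊕ x.
Proof.
  unfold add_comm. rewrite sub_eq0. split; intro H.
  - rewrite <- (addNKr x (x ⊕ y)), H. reflexivity.
  - rewrite H. apply addKr.
Qed.

Record trivial_elt (x : A) : Prop := {
  triv_circl : forall y, x ⊙ y = x ⊕ y;
  triv_circr : forall y, y ⊙ x = y ⊕ x;
  triv_addC  : forall y, x ⊕ y = y ⊕ x
}.

Lemma zeta_trivial (x : A) : zeta x <-> trivial_elt x.
Proof.
  split.
  - intro H. split; intro y; destruct (H y) as [H1 [H2 H3]].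
    + apply star_eq0, H1.
    + apply star_eq0, H2.
    + apply add_comm_eq0, H3.
  - intros [H1 H2 H3] y. rewrite star_eq0, star_eq0, add_comm_eq0. auto.
Qed.

Lemma triv_circC (x y : A) : trivial_elt x -> x ⊙ y = y ⊙ x.
Proof. intros [H1 H2 H3]. rewrite H1, H2, H3. reflexivity. Qed.

Lemma triv0 : trivial_elt O.
Proof.
  split; intro y.
  - rewrite sb_circ0l, sb_add0l. reflexivity.
  - rewrite sb_circ0r, sb_add0r. reflexivity.
  - rewrite sb_add0l, sb_add0r. reflexivity.
Qed.

Lemma triv_add (x x' : A) : trivial_elt x -> trivial_elt x' -> trivial_elt (x ⊕ x').
Proof.
  intros Hx Hx'.
  assert (E : x ⊕ x' = x ⊙ x') by (symmetry; apply (triv_circl _ Hx)).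
  split; intro y.
  - rewrite E at 1. rewrite <- sb_circA, (triv_circl _ Hx'), (triv_circl _ Hx).
    apply sb_addA.
  - rewrite E at 1. rewrite sb_circA, (triv_circr _ Hx), (triv_circr _ Hx').
    symmetry; apply sb_addA.
  - rewrite <- sb_addA, (triv_addC _ Hx'), sb_addA, (triv_addC _ Hx).
    symmetry; apply sb_addA.
Qed.

Lemma triv_inv (x : A) : trivial_elt x -> inv x = ⊖ x.
Proof. intro Hx. apply inv_uniq. rewrite (triv_circl _ Hx). apply sb_addNr. Qed.

Lemma triv_opp (x : A) : trivial_elt x -> trivial_elt (⊖ x).
Proof.
  intro Hx. pose proof (triv_inv _ Hx) as Ei.
  split; intro y.
  - (* x o (bar x o y) = y, and x o w = x + w *)
    rewrite <- Ei at 1. rewrite <- (addKl x (inv x ⊙ y)).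
    rewrite <- (triv_circl _ Hx (inv x ⊙ y)), sb_circA, sb_circVr, sb_circ0l.
    reflexivity.
  - rewrite <- Ei at 1. rewrite <- (addKr x (y ⊙ inv x)).
    rewrite <- (triv_circr _ Hx (y ⊙ inv x)), <- sb_circA, sb_circVl, sb_circ0r.
    reflexivity.
  - transitivity (⊖ x ⊕ (x ⊕ y) ⊕ ⊖ x).
    + rewrite (triv_addC _ Hx y), sb_addA, addKr. reflexivity.
    + rewrite addKl. reflexivity.
Qed.

Lemma triv_circ (x y : A) : trivial_elt x -> trivial_elt y -> trivial_elt (x ⊙ y).
Proof. intros Hx Hy. rewrite (triv_circl _ Hx). apply triv_add; assumption. Qed.

Lemma triv_inv_closed (x : A) : trivial_elt x -> trivial_elt (inv x).
Proof. intro Hx. rewrite (triv_inv _ Hx). apply triv_opp, Hx. Qed.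

(* Part 1: zeta(A) is an ideal, since trivially acting elements are fixed by
   lambda and by both conjugations. *)
Lemma zeta_ideal : is_ideal (@zeta A).
Proof.
  unfold is_ideal. setoid_rewrite zeta_trivial.
  repeat match goal with |- _ /\ _ => split end; intros.
  - apply triv0.
  - apply triv_add; assumption.
  - apply triv_opp; assumption.
  - unfold lam. rewrite (triv_circr _ H), addKl. assumption.
  - rewrite <- (triv_addC _ H), addKr. assumption.
  - apply triv_circ; assumption.
  - apply triv_inv_closed; assumption.
  - rewrite <- (triv_circC x a H), <- sb_circA, sb_circVr, sb_circ0r.
    assumption.
Qed.

Lemma add_shift (u v c d : A) :
  trivial_elt c -> (u ⊕ c) ⊕ (v ⊕ d) = (u ⊕ v) ⊕ (c ⊕ d).
Proof.
  intro Hc. rewrite <- !sb_addA. f_equal. rewrite !sb_addA, (triv_addC _ Hc).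
  reflexivity.
Qed.

Lemma opp_shift (u c : A) : trivial_elt c -> ⊖ (u ⊕ c) = ⊖ u ⊕ ⊖ c.
Proof. intro Hc. rewrite oppD. apply (triv_addC _ (triv_opp _ Hc)). Qed.

Lemma circ_shift (u v c d : A) :
  trivial_elt c -> trivial_elt d -> (u ⊕ c) ⊙ (v ⊕ d) = (u ⊙ v) ⊕ (c ⊙ d).
Proof.
  intros Hc Hd.
  rewrite <- (triv_circr _ Hc), <- (triv_circr _ Hd), <- (triv_circr _ (triv_circ _ _ Hc Hd)).
  rewrite <- !sb_circA. f_equal. rewrite !sb_circA. f_equal. apply triv_circC, Hc.
Qed.

Lemma inv_shift (u c : A) : trivial_elt c -> inv (u ⊕ c) = inv u ⊕ inv c.
Proof.
  intro Hc.
  rewrite <- (triv_circr _ Hc), <- (triv_circr _ (triv_inv_closed _ Hc)), invM.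
  apply triv_circC, triv_inv_closed, Hc.
Qed.

Lemma beval_shift (z : A) (Hz : trivial_elt z) (t : bterm A) :
  exists c, trivial_elt c /\ forall a, beval A t a z = beval A t a O ⊕ c.
Proof.
  induction t as [| | k | | t1 [c1 [H1 E1]] t2 [c2 [H2 E2]] | t1 [c1 [H1 E1]]
                 | t1 [c1 [H1 E1]] t2 [c2 [H2 E2]] | t1 [c1 [H1 E1]]]; simpl.
  - exists O. split; [apply triv0 | intro a; symmetry; apply sb_add0r].
  - exists z. split; [exact Hz | intro a; symmetry; apply sb_add0l].
  - exists O. split; [apply triv0 | intro a; symmetry; apply sb_add0r].
  - exists O. split; [apply triv0 | intro a; symmetry; apply sb_add0r].
  - exists (c1 ⊕ c2). split; [apply triv_add; assumption |].
    intro a. rewrite E1, E2. apply add_shift, H1.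
  - exists (⊖ c1). split; [apply triv_opp, H1 |].
    intro a. rewrite E1. apply opp_shift, H1.
  - exists (c1 ⊙ c2). split; [apply triv_circ; assumption |].
    intro a. rewrite E1, E2. apply circ_shift; assumption.
  - exists (inv c1). split; [apply triv_inv_closed, H1 |].
    intro a. rewrite E1. apply inv_shift, H1.
Qed.

(* Absorbing polynomials vanish on A x zeta(A): t(a,z) = t(a,0) + t(0,z). *)
Lemma absorbing_zeta_vanish (t : bterm A) (a z : A) :
  absorbing t -> zeta z -> beval A t a z = O.
Proof.
  intros Ht Hz. apply zeta_trivial in Hz.
  destruct (beval_shift z Hz t) as [c [_ E]].
  assert (Ec : c = O).
  { pose proof (E O) as E0.
    rewrite (proj2 (Ht z)), (proj1 (Ht O)), sb_add0l in E0. symmetry; exact E0. }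
  rewrite E, Ec, (proj1 (Ht a)). apply sb_add0l.
Qed.

Lemma zero_ideal : is_ideal (fun z : A => z = O).
Proof.
  unfold is_ideal, lam. repeat split; intros; subst.
  - apply sb_add0l.
  - apply opp0.
  - rewrite sb_circ0r. apply sb_addNl.
  - rewrite sb_add0r. apply sb_addNr.
  - apply sb_circ0l.
  - apply inv_uniq, sb_circ0l.
  - rewrite sb_circ0r. apply sb_circVr.
Qed.

Lemma ideal_gen_zero (S : A -> Prop) (z : A) :
  (forall s, S s -> s = O) -> ideal_gen S z <-> z = O.
Proof.
  intro HS. split.
  - intro H. apply (H _ zero_ideal HS).
  - intros -> J HJ _. exact (proj1 HJ).
Qed.

Lemma zeta_central : central (@zeta A).
Proof.
  intro z. apply ideal_gen_zero.
  intros s [t [a [x [Ht [_ [Hx ->]]]]]]. apply absorbing_zeta_vanish; assumption.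
Qed.

Lemma central_absorbing_vanish (I : A -> Prop) (t : bterm A) (a x : A) :
  central I -> I x -> absorbing t -> beval A t a x = O.
Proof.
  intros HC Hx Ht. apply (proj1 (HC _)). intros J _ HS. apply HS.
  exists t, a, x. split; [exact Ht |]. split; [exact Logic.I |]. auto.
Qed.

Definition star_term (s t : bterm A) : bterm A :=
  TAdd A (TAdd A (TOpp A s) (TCirc A s t)) (TOpp A t).

Definition add_comm_term (s t : bterm A) : bterm A :=
  TAdd A (TAdd A (TAdd A s t) (TOpp A s)) (TOpp A t).

Lemma star0l (y : A) : sb_star O y = O.
Proof. unfold sb_star. rewrite opp0, sb_add0l, sb_circ0l. apply sb_addNr. Qed.

Lemma star0r (x : A) : sb_star x O = O.
Proof. unfold sb_star. rewrite opp0, sb_add0r, sb_circ0r. apply sb_addNl. Qed.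

Lemma add_comm0l (y : A) : add_comm O y = O.
Proof. unfold add_comm. rewrite opp0, sb_add0r, sb_add0l. apply sb_addNr. Qed.

Lemma add_comm0r (x : A) : add_comm x O = O.
Proof. unfold add_comm. rewrite opp0, !sb_add0r. apply sb_addNr. Qed.

Lemma star_term_absorbing (s t : bterm A) :
  (s = TVarX A /\ t = TVarY A) \/ (s = TVarY A /\ t = TVarX A) ->
  absorbing (star_term s t).
Proof.
  unfold absorbing. intros [[-> ->] | [-> ->]] a; split; simpl;
    first [apply star0l | apply star0r].
Qed.

Lemma add_comm_term_absorbing (s t : bterm A) :
  (s = TVarX A /\ t = TVarY A) \/ (s = TVarY A /\ t = TVarX A) ->
  absorbing (add_comm_term s t).
Proof.
  unfold absorbing. intros [[-> ->] | [-> ->]] a; split; simpl;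
    first [apply add_comm0l | apply add_comm0r].
Qed.

Lemma central_ideal_in_zeta (I : A -> Prop) :
  central I -> forall x, I x -> zeta x.
Proof.
  intros HC x Hx y.
  assert (V : forall t, absorbing t -> beval A t y x = O)
    by (intros t Ht; apply (central_absorbing_vanish I); assumption).
  split; [| split].
  - apply (V (star_term (TVarY A) (TVarX A))), star_term_absorbing; auto.
  - apply (V (star_term (TVarX A) (TVarY A))), star_term_absorbing; auto.
  - apply (V (add_comm_term (TVarY A) (TVarX A))), add_comm_term_absorbing; auto.
Qed.

End SkewBraceCentre.

Theorem mainTheorem16 (A : skew_brace) :
  is_ideal (@zeta A) /\ central (@zeta A) /\
  (forall I : A -> Prop, is_ideal I -> central I -> forall x, I x -> zeta x).
Proof.
  split; [apply zeta_ideal |].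
  split; [apply zeta_central |].
  intros I _ HC. apply central_ideal_in_zeta, HC.
Qed.
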